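(* Let $S$ be a three-level system with Hamiltonian $H_S=\sum_{i=0}^2E_i|i\rangle\langle i|$ where $E_2-E_1=E_1-E_0=\Delta E>0$. Let $\rho$ be a state with $\langle1|\rho|2\rangle=0$, and let $\mathcal{T}$ be any Thermal Operation on $S$. Then $$|\langle1|\mathcal{T}(\rho)|2\rangle|\le e^{-\beta\Delta E}\,|\langle0|\rho|1\rangle|.$$
   Context: $\beta>0$. A Thermal Operation on $S$ is a channel $\mathcal{T}(\rho)=\mathrm{tr}_B[U(\rho\otimes\gamma_B)U^\dagger]$ with $B$ any finite-dimensional system, $H_B$ any Hamiltonian, $\gamma_B=e^{-\beta H_B}/\mathrm{tr}\,e^{-\beta H_B}$, and $U$ unitary with $[U,H_S\otimes\mathbb{I}+\mathbb{I}\otimes H_B]=0$. *)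

From Stdlib Require Import Reals.
Open Scope R_scope.

Definition C : Type := (R * R)%type.
Definition RC (r : R) : C := (r, 0).
Definition C0 : C := RC 0.
Definition C1 : C := RC 1.
Definition Cadd (z w : C) : C := (fst z + fst w, snd z + snd w).
Definition Cmul (z w : C) : C :=
  (fst z * fst w - snd z * snd w, fst z * snd w + snd z * fst w).
Definition Cconj (z : C) : C := (fst z, - snd z).
Definition Cmod (z : C) : R := sqrt (fst z ^ 2 + snd z ^ 2).

Fixpoint csum (n : nat) (f : nat -> C) : C :=
  match n with O => C0 | S m => Cadd (csum m f) (f m) end.
Fixpoint rsum (n : nat) (f : nat -> R) : R :=
  match n with O => 0 | S m => rsum m f + f m end.

(** Matrices on C^n: entries A i j = <i|A|j> (0-indexed); only i,j < n matter. *)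
Definition Mat : Type := nat -> nat -> C.
Definition mat_eq (n : nat) (A B : Mat) : Prop :=
  forall i j, (i < n)%nat -> (j < n)%nat -> A i j = B i j.
Definition mmul (n : nat) (A B : Mat) : Mat :=
  fun i j => csum n (fun k => Cmul (A i k) (B k j)).
Definition adj (A : Mat) : Mat := fun i j => Cconj (A j i).
Definition delta (i j : nat) : C := if Nat.eqb i j then C1 else C0.
Definition diag (v : nat -> C) : Mat := fun i j => if Nat.eqb i j then v i else C0.
Definition trace (n : nat) (A : Mat) : C := csum n (fun i => A i i).
Definition unitary (n : nat) (U : Mat) : Prop :=
  mat_eq n (mmul n U (adj U)) delta /\ mat_eq n (mmul n (adj U) U) delta.
Definition hermitian (n : nat) (A : Mat) : Prop := mat_eq n (adj A) A.
Definition psd (n : nat) (A : Mat) : Prop :=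
  hermitian n A /\
  forall v : nat -> C,
    0 <= fst (csum n (fun i => Cmul (Cconj (v i))
                                    (csum n (fun j => Cmul (A i j) (v j))))).
Definition density (n : nat) (rho : Mat) : Prop := psd n rho /\ trace n rho = C1.

(** Gibbs state gamma = e^{-beta H}/tr e^{-beta H} of a Hermitian H on C^d,
    via the functional calculus: H = V diag(eps) V^dagger with V unitary, eps real,
    and gamma = V diag(e^{-beta eps_k}/Z) V^dagger, Z = sum_k e^{-beta eps_k}. *)
Definition gibbs_state (d : nat) (beta : R) (H gamma : Mat) : Prop :=
  exists (V : Mat) (eps : nat -> R),
    unitary d V /\
    mat_eq d H (mmul d (mmul d V (diag (fun k => RC (eps k)))) (adj V)) /\
    mat_eq d gamma
      (mmul d (mmul d V
         (diag (fun k => RC (exp (- beta * eps k) /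
                             rsum d (fun l => exp (- beta * eps l)))))) (adj V)).

(** Operators on the composite system S (x) B, dims dS, dB:
    M i b j b' = <i,b| M |j,b'>. *)
Definition Op2 : Type := nat -> nat -> nat -> nat -> C.
Definition op2_eq (dS dB : nat) (A B : Op2) : Prop :=
  forall i b j b', (i < dS)%nat -> (b < dB)%nat -> (j < dS)%nat -> (b' < dB)%nat ->
    A i b j b' = B i b j b'.
Definition mmul2 (dS dB : nat) (A B : Op2) : Op2 :=
  fun i b j b' => csum dS (fun k => csum dB (fun c => Cmul (A i b k c) (B k c j b'))).
Definition adj2 (A : Op2) : Op2 := fun i b j b' => Cconj (A j b' i b).
Definition delta2 : Op2 := fun i b j b' => Cmul (delta i j) (delta b b').
Definition unitary2 (dS dB : nat) (U : Op2) : Prop :=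
  op2_eq dS dB (mmul2 dS dB U (adj2 U)) delta2 /\
  op2_eq dS dB (mmul2 dS dB (adj2 U) U) delta2.
Definition tensor (A B : Mat) : Op2 := fun i b j b' => Cmul (A i j) (B b b').
Definition Htot (HS HB : Mat) : Op2 :=
  fun i b j b' => Cadd (Cmul (HS i j) (delta b b')) (Cmul (delta i j) (HB b b')).
Definition ptraceB (dB : nat) (M : Op2) : Mat :=
  fun i j => csum dB (fun b => M i b j b).

Definition thermal_operation (dS : nat) (beta : R) (HS : Mat) (T : Mat -> Mat) : Prop :=
  exists (dB : nat) (HB gammaB : Mat) (U : Op2),
    (0 < dB)%nat /\
    hermitian dB HB /\
    gibbs_state dB beta HB gammaB /\
    unitary2 dS dB U /\
    op2_eq dS dB (mmul2 dS dB U (Htot HS HB)) (mmul2 dS dB (Htot HS HB) U) /\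
    forall rho : Mat,
      mat_eq dS (T rho)
        (ptraceB dB (mmul2 dS dB (mmul2 dS dB U (tensor rho gammaB)) (adj2 U))).

Definition H3 (E0 E1 E2 : R) : Mat :=
  diag (fun i => RC (match i with O => E0 | S O => E1 | _ => E2 end)).

From Stdlib Require Import Reals Lra Lia Psatz Setoid Morphisms.
From Coquelicot Require Complex.
Open Scope R_scope.

(* Write U in blocks U_ik acting on the bath and pass to the eigenbasis of
   H_B: W_ik = V^dagger U_ik V.  Then
     T(rho)_12 = sum_{k,l} rho_kl tr(W_1k G W_2l^dagger),
   with G the diagonal matrix of Gibbs weights g_b.  Energy conservation
   [U, H_S + H_B] = 0 forces W_ik(b,c) = 0 unless E_k + eps_c = E_i + eps_b,
   so only the pairs (k,l) with E_l - E_k = E_2 - E_1 contribute, namely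
   (0,1) and (1,2), and the latter is killed by rho_12 = 0.  On the support
   of W_10 the Gibbs weights satisfy g_c = e^{-beta DE} g_b, so AM-GM and the
   unit row norms of the unitary U bound |tr(W_10 G W_21^dagger)| by
   e^{-beta DE} sum_b g_b = e^{-beta DE}. *)

Definition Copp (z : C) : C := (- fst z, - snd z).
Definition Csub (z w : C) : C := Cadd z (Copp w).

Lemma C_ring_theory : ring_theory C0 C1 Cadd Cmul Csub Copp eq.
Proof.
  constructor; intros;
  repeat match goal with z : C |- _ => destruct z end;
  unfold Csub, Copp, Cadd, Cmul, C0, C1, RC; simpl; f_equal; ring.
Qed.
Add Ring C_ring : C_ring_theory.

Lemma Cmod_triangle (x y : C) : Cmod (Cadd x y) <= Cmod x + Cmod y.
Proof. exact (Complex.Cmod_triangle x y). Qed.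

Lemma Cmod_mul (x y : C) : Cmod (Cmul x y) = Cmod x * Cmod y.
Proof. exact (Complex.Cmod_mult x y). Qed.

Lemma Cmod_conj (x : C) : Cmod (Cconj x) = Cmod x.
Proof. exact (Complex.Cmod_conj x). Qed.

Lemma Cmod_ge_0 (x : C) : 0 <= Cmod x.
Proof. exact (Complex.Cmod_ge_0 x). Qed.

Lemma Cmod_RC (x : R) : 0 <= x -> Cmod (RC x) = x.
Proof.
  intros Hx. unfold Cmod, RC; simpl.
  replace (x * (x * 1) + 0 * (0 * 1)) with (x * x) by ring.
  apply sqrt_square; lra.
Qed.

Lemma Cmod_C0 : Cmod C0 = 0.
Proof. apply Cmod_RC. lra. Qed.

Lemma Cmod_sqr (z : C) : Cmod z ^ 2 = fst (Cmul z (Cconj z)).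
Proof.
  unfold Cmod. rewrite pow2_sqrt by nra.
  destruct z; unfold Cmul, Cconj; simpl. ring.
Qed.

Lemma Cconj_mul (a b : C) : Cconj (Cmul a b) = Cmul (Cconj a) (Cconj b).
Proof. destruct a, b; unfold Cconj, Cmul; simpl; f_equal; ring. Qed.

Lemma Cconj_involutive (a : C) : Cconj (Cconj a) = a.
Proof. destruct a; unfold Cconj; simpl; f_equal; ring. Qed.

Lemma Cconj_add (a b : C) : Cconj (Cadd a b) = Cadd (Cconj a) (Cconj b).
Proof. destruct a, b; unfold Cconj, Cadd; simpl; f_equal; ring. Qed.

Lemma Cconj_C0 : Cconj C0 = C0.
Proof. unfold Cconj, C0, RC; simpl. f_equal. ring. Qed.

Section FiniteSums.
Implicit Types (n m : nat) (f g : nat -> C) (u v : nat -> R).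

Lemma csum_ext n f g : (forall k, (k < n)%nat -> f k = g k) -> csum n f = csum n g.
Proof.
  induction n; intros H; simpl; auto.
  rewrite IHn by (intros; apply H; lia). rewrite H by lia. reflexivity.
Qed.

Lemma csum_add n f g : csum n (fun k => Cadd (f k) (g k)) = Cadd (csum n f) (csum n g).
Proof. induction n; simpl; [ring | rewrite IHn; ring]. Qed.

Lemma csum_mul_l n a f : csum n (fun k => Cmul a (f k)) = Cmul a (csum n f).
Proof. induction n; simpl; [ring | rewrite IHn; ring]. Qed.

Lemma csum_mul_r n a f : csum n (fun k => Cmul (f k) a) = Cmul (csum n f) a.
Proof. induction n; simpl; [ring | rewrite IHn; ring]. Qed.

Lemma csum_eq0 n f : (forall k, (k < n)%nat -> f k = C0) -> csum n f = C0.
Proof.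
  induction n; intros H; simpl; auto.
  rewrite IHn by (intros; apply H; lia). rewrite H by lia. ring.
Qed.

Lemma csum_swap n m (f : nat -> nat -> C) :
  csum n (fun i => csum m (fun j => f i j)) = csum m (fun j => csum n (fun i => f i j)).
Proof.
  induction n; simpl.
  - symmetry. apply csum_eq0. auto.
  - rewrite IHn, <- csum_add. reflexivity.
Qed.

Lemma csum_single n f i : (i < n)%nat ->
  (forall k, (k < n)%nat -> k <> i -> f k = C0) -> csum n f = f i.
Proof.
  induction n; intros Hi H; [lia|]. simpl.
  destruct (Nat.eq_dec i n) as [->|Hne].
  - rewrite csum_eq0 by (intros; apply H; lia). ring.
  - rewrite IHn, (H n) by (intros; try apply H; lia). ring.
Qed.

Lemma csum_delta_l n j f : (j < n)%nat -> csum n (fun k => Cmul (delta k j) (f k)) = f j.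
Proof.
  intros Hj. rewrite (csum_single n _ j Hj).
  - unfold delta. rewrite Nat.eqb_refl. ring.
  - intros k _ Hne. unfold delta. apply Nat.eqb_neq in Hne. rewrite Hne. ring.
Qed.

Lemma csum_delta_r n j f : (j < n)%nat -> csum n (fun k => Cmul (delta j k) (f k)) = f j.
Proof.
  intros Hj. rewrite <- (csum_delta_l n j f Hj). apply csum_ext. intros k _.
  unfold delta. rewrite Nat.eqb_sym. reflexivity.
Qed.

Lemma csum_conj n f : Cconj (csum n f) = csum n (fun k => Cconj (f k)).
Proof.
  induction n; simpl.
  - exact Cconj_C0.
  - rewrite Cconj_add, IHn. reflexivity.
Qed.

Lemma fst_csum n f : fst (csum n f) = rsum n (fun k => fst (f k)).
Proof. induction n; simpl; auto. rewrite IHn. reflexivity. Qed.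

Lemma rsum_ext n u v : (forall k, (k < n)%nat -> u k = v k) -> rsum n u = rsum n v.
Proof.
  induction n; intros H; simpl; auto.
  rewrite IHn by (intros; apply H; lia). rewrite H by lia. reflexivity.
Qed.

Lemma rsum_le n u v : (forall k, (k < n)%nat -> u k <= v k) -> rsum n u <= rsum n v.
Proof.
  induction n; intros H; simpl; [lra|].
  pose proof (IHn (fun k Hk => H k ltac:(lia))). pose proof (H n ltac:(lia)). lra.
Qed.

Lemma rsum_add n u v : rsum n (fun k => u k + v k) = rsum n u + rsum n v.
Proof. induction n; simpl; [ring | rewrite IHn; ring]. Qed.

Lemma rsum_scal n a u : rsum n (fun k => a * u k) = a * rsum n u.
Proof. induction n; simpl; [ring | rewrite IHn; ring]. Qed.

Lemma rsum_ge0 n u : (forall k, (k < n)%nat -> 0 <= u k) -> 0 <= rsum n u.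
Proof.
  intros H. apply Rle_trans with (rsum n (fun _ => 0)).
  - clear H. induction n; simpl; lra.
  - apply rsum_le. auto.
Qed.

Lemma rsum_gt0 n u : (0 < n)%nat -> (forall k, (k < n)%nat -> 0 < u k) -> 0 < rsum n u.
Proof.
  destruct n; intros Hn H; [lia|]. simpl.
  pose proof (rsum_ge0 n u (fun k Hk => Rlt_le _ _ (H k ltac:(lia)))).
  pose proof (H n ltac:(lia)). lra.
Qed.

Lemma rsum_term_le n u j : (j < n)%nat -> (forall k, (k < n)%nat -> 0 <= u k) ->
  u j <= rsum n u.
Proof.
  induction n; intros Hj H; simpl; [lia|].
  destruct (Nat.eq_dec j n) as [->|Hne].
  - pose proof (rsum_ge0 n u (fun k Hk => H k ltac:(lia))). lra.
  - pose proof (IHn ltac:(lia) (fun k Hk => H k ltac:(lia))). pose proof (H n ltac:(lia)). lra.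
Qed.

Lemma Cmod_csum n f : Cmod (csum n f) <= rsum n (fun k => Cmod (f k)).
Proof.
  induction n; simpl.
  - rewrite Cmod_C0. lra.
  - eapply Rle_trans; [apply Cmod_triangle | lra].
Qed.

End FiniteSums.

Definition madd (A B : Mat) : Mat := fun i j => Cadd (A i j) (B i j).
Definition mscale (a : C) (A : Mat) : Mat := fun i j => Cmul a (A i j).
Definition msum (m : nat) (F : nat -> Mat) : Mat := fun i j => csum m (fun k => F k i j).

Section MatrixEquality.
Variable n : nat.

Lemma mat_eq_refl A : mat_eq n A A.
Proof. intros i j _ _; reflexivity. Qed.

Lemma mat_eq_sym A B : mat_eq n A B -> mat_eq n B A.
Proof. intros H i j Hi Hj; symmetry; auto. Qed.

Lemma mat_eq_trans A B D : mat_eq n A B -> mat_eq n B D -> mat_eq n A D.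
Proof. intros H1 H2 i j Hi Hj; rewrite H1; auto. Qed.

End MatrixEquality.

Add Parametric Relation (n : nat) : Mat (mat_eq n)
  reflexivity proved by (mat_eq_refl n)
  symmetry proved by (mat_eq_sym n)
  transitivity proved by (mat_eq_trans n) as mat_eq_rel.

Add Parametric Morphism (n : nat) : (mmul n) with signature
  mat_eq n ==> mat_eq n ==> mat_eq n as mmul_mor.
Proof.
  intros A A' HA B B' HB i j Hi Hj. unfold mmul. apply csum_ext. intros k Hk.
  rewrite HA, HB by auto. reflexivity.
Qed.

Add Parametric Morphism (n : nat) : madd with signature
  mat_eq n ==> mat_eq n ==> mat_eq n as madd_mor.
Proof. intros A A' HA B B' HB i j Hi Hj. unfold madd. rewrite HA, HB by auto. reflexivity. Qed.

Add Parametric Morphism (n : nat) (a : C) : (mscale a) with signature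
  mat_eq n ==> mat_eq n as mscale_mor.
Proof. intros A A' HA i j Hi Hj. unfold mscale. rewrite HA by auto. reflexivity. Qed.

Add Parametric Morphism (n : nat) : (trace n) with signature
  mat_eq n ==> eq as trace_mor.
Proof. intros A A' HA. unfold trace. apply csum_ext. intros; apply HA; auto. Qed.

Section MatrixAlgebra.
Variable n : nat.
Implicit Types A B D : Mat.

Lemma mmulA A B D : mat_eq n (mmul n (mmul n A B) D) (mmul n A (mmul n B D)).
Proof.
  intros i j _ _. unfold mmul.
  rewrite <- (csum_ext n (fun k => csum n (fun l => Cmul (A i l) (Cmul (B l k) (D k j))))).
  2:{ intros k _. rewrite <- csum_mul_r. apply csum_ext. intros; ring. }
  rewrite csum_swap. apply csum_ext. intros l _. rewrite <- csum_mul_l. reflexivity.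
Qed.

Lemma mmul1l A : mat_eq n (mmul n delta A) A.
Proof. intros i j Hi _. unfold mmul. apply (csum_delta_r n i (fun k => A k j) Hi). Qed.

Lemma mmul1r A : mat_eq n (mmul n A delta) A.
Proof.
  intros i j _ Hj. unfold mmul. rewrite <- (csum_delta_l n j (fun k => A i k) Hj).
  apply csum_ext. intros; ring.
Qed.

Lemma adj_mmul A B : mat_eq n (adj (mmul n A B)) (mmul n (adj B) (adj A)).
Proof.
  intros i j _ _. unfold adj, mmul. rewrite csum_conj. apply csum_ext. intros.
  rewrite Cconj_mul. ring.
Qed.

Lemma adjK A : mat_eq n (adj (adj A)) A.
Proof. intros i j _ _. apply Cconj_involutive. Qed.

Lemma trace_mmulC A B : trace n (mmul n A B) = trace n (mmul n B A).
Proof.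
  unfold trace, mmul. rewrite csum_swap. apply csum_ext. intros. apply csum_ext. intros. ring.
Qed.

Lemma mmul_maddl A B D : mat_eq n (mmul n (madd A B) D) (madd (mmul n A D) (mmul n B D)).
Proof. intros i j _ _. unfold mmul, madd. rewrite <- csum_add. apply csum_ext. intros; ring. Qed.

Lemma mmul_maddr A B D : mat_eq n (mmul n D (madd A B)) (madd (mmul n D A) (mmul n D B)).
Proof. intros i j _ _. unfold mmul, madd. rewrite <- csum_add. apply csum_ext. intros; ring. Qed.

Lemma mmul_mscalel a A B : mat_eq n (mmul n (mscale a A) B) (mscale a (mmul n A B)).
Proof.
  intros i j _ _. unfold mmul, mscale. rewrite <- csum_mul_l. apply csum_ext. intros; ring.
Qed.

Lemma mmul_mscaler a A B : mat_eq n (mmul n A (mscale a B)) (mscale a (mmul n A B)).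
Proof.
  intros i j _ _. unfold mmul, mscale. rewrite <- csum_mul_l. apply csum_ext. intros; ring.
Qed.

Lemma mmul_msuml m F A : mat_eq n (mmul n A (msum m F)) (msum m (fun k => mmul n A (F k))).
Proof.
  intros i j _ _. unfold mmul, msum. rewrite <- csum_swap.
  apply csum_ext. intros. symmetry. apply csum_mul_l.
Qed.

Lemma mmul_msumr m F A : mat_eq n (mmul n (msum m F) A) (msum m (fun k => mmul n (F k) A)).
Proof.
  intros i j _ _. unfold mmul, msum. rewrite <- csum_swap.
  apply csum_ext. intros. symmetry. apply csum_mul_r.
Qed.

Lemma msum_ext m F G : (forall k, (k < m)%nat -> mat_eq n (F k) (G k)) ->
  mat_eq n (msum m F) (msum m G).
Proof. intros H i j Hi Hj. unfold msum. apply csum_ext. intros. apply H; auto. Qed.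

Lemma mmul_diagr A v i j : (j < n)%nat -> mmul n A (diag v) i j = Cmul (A i j) (v j).
Proof.
  intros Hj. unfold mmul. rewrite (csum_single n _ j Hj).
  - unfold diag. rewrite Nat.eqb_refl. reflexivity.
  - intros k _ Hne. unfold diag. apply Nat.eqb_neq in Hne. rewrite Hne. ring.
Qed.

Lemma mmul_diagl A v i j : (i < n)%nat -> mmul n (diag v) A i j = Cmul (v i) (A i j).
Proof.
  intros Hi. unfold mmul. rewrite (csum_single n _ i Hi).
  - unfold diag. rewrite Nat.eqb_refl. reflexivity.
  - intros k _ Hne. unfold diag. apply not_eq_sym, Nat.eqb_neq in Hne. rewrite Hne. ring.
Qed.

Section Conjugation.
Variable V : Mat.
Hypothesis HV : mat_eq n (mmul n V (adj V)) delta.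

Lemma conj_unitary_mmul A B :
  mat_eq n (mmul n (mmul n (mmul n (adj V) A) V) (mmul n (mmul n (adj V) B) V))
           (mmul n (mmul n (adj V) (mmul n A B)) V).
Proof. rewrite !mmulA, <- (mmulA V (adj V)), HV, mmul1l. reflexivity. Qed.

End Conjugation.
End MatrixAlgebra.

Definition gibbs_weight (d : nat) (beta : R) (eps : nat -> R) (k : nat) : R :=
  exp (- beta * eps k) / rsum d (fun l => exp (- beta * eps l)).

Section GibbsWeights.
Variables (d : nat) (beta : R) (eps : nat -> R).
Hypothesis Hd : (0 < d)%nat.

Lemma gibbs_partition_gt0 : 0 < rsum d (fun l => exp (- beta * eps l)).
Proof. apply rsum_gt0; auto. intros; apply exp_pos. Qed.

Lemma gibbs_weight_ge0 k : 0 <= gibbs_weight d beta eps k.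
Proof.
  pose proof gibbs_partition_gt0. pose proof (exp_pos (- beta * eps k)).
  apply Rlt_le, Rdiv_lt_0_compat; auto.
Qed.

Lemma gibbs_weight_sum : rsum d (gibbs_weight d beta eps) = 1.
Proof.
  pose proof gibbs_partition_gt0. unfold gibbs_weight, Rdiv.
  rewrite (rsum_ext d _ (fun k => / rsum d (fun l => exp (- beta * eps l)) * exp (- beta * eps k)))
    by (intros; ring).
  rewrite rsum_scal. field. lra.
Qed.

Lemma gibbs_weight_shift b c x : eps c = eps b + x ->
  gibbs_weight d beta eps c = exp (- beta * x) * gibbs_weight d beta eps b.
Proof.
  intros E. pose proof gibbs_partition_gt0. unfold gibbs_weight. rewrite E.
  replace (- beta * (eps b + x)) with (- beta * x + - beta * eps b) by ring.
  rewrite exp_plus. field. lra.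
Qed.

End GibbsWeights.

Section ThermalBlocks.
Variables (dS dB : nat) (beta : R) (En eps : nat -> R) (V HB gam : Mat) (U : Op2).
Let D := diag (fun k => RC (eps k)).
Let G := diag (fun k => RC (gibbs_weight dB beta eps k)).
Hypothesis HV1 : mat_eq dB (mmul dB V (adj V)) delta.
Hypothesis HV2 : mat_eq dB (mmul dB (adj V) V) delta.
Hypothesis HHB : mat_eq dB HB (mmul dB (mmul dB V D) (adj V)).
Hypothesis Hgam : mat_eq dB gam (mmul dB (mmul dB V G) (adj V)).
Hypothesis HU : op2_eq dS dB (mmul2 dS dB U (adj2 U)) delta2.
Hypothesis Hcomm : op2_eq dS dB (mmul2 dS dB U (Htot (diag (fun i => RC (En i))) HB))
                                (mmul2 dS dB (Htot (diag (fun i => RC (En i))) HB) U).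

Definition block (i k : nat) : Mat := fun b c => U i b k c.
Definition eigen_block (i k : nat) : Mat := mmul dB (mmul dB (adj V) (block i k)) V.
Let W := eigen_block.

Lemma eigenbasis_HB : mat_eq dB (mmul dB (mmul dB (adj V) HB) V) D.
Proof.
  rewrite HHB, !mmulA, HV2, mmul1r, <- mmulA, HV2, mmul1l. reflexivity.
Qed.

Lemma block_commutation i k : (i < dS)%nat -> (k < dS)%nat ->
  mat_eq dB (madd (mscale (RC (En k)) (block i k)) (mmul dB (block i k) HB))
            (madd (mscale (RC (En i)) (block i k)) (mmul dB HB (block i k))).
Proof.
  intros Hi Hk b c Hb Hc. pose proof (Hcomm i b k c Hi Hb Hk Hc) as H.
  unfold mmul2, Htot in H.
  rewrite (csum_ext dS _ (fun l => Cmul (delta l k) (Cadd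
      (csum dB (fun c2 => Cmul (delta c2 c) (Cmul (U i b l c2) (RC (En l)))))
      (csum dB (fun c2 => Cmul (U i b l c2) (HB c2 c)))))) in H.
  2:{ intros l _. rewrite <- csum_add, <- csum_mul_l. apply csum_ext. intros c2 _.
      unfold diag, delta. destruct (Nat.eqb l k); ring. }
  match type of H with ?L = _ => set (lhs := L) in H end.
  rewrite (csum_ext dS _ (fun l => Cmul (delta i l) (Cadd
      (csum dB (fun c2 => Cmul (delta b c2) (Cmul (RC (En l)) (U l c2 k c))))
      (csum dB (fun c2 => Cmul (HB b c2) (U l c2 k c)))))) in H.
  2:{ intros l _. rewrite <- csum_add, <- csum_mul_l. apply csum_ext. intros c2 _.
      unfold diag, delta. destruct (Nat.eqb_spec i l); [subst|]; ring. }
  subst lhs. rewrite csum_delta_l, csum_delta_r, csum_delta_l, csum_delta_r in H by auto.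
  unfold madd, mscale, block, mmul.
  match type of H with ?L = _ => transitivity L; [ring | rewrite H; ring] end.
Qed.

Lemma eigen_block_commutation i k : (i < dS)%nat -> (k < dS)%nat ->
  mat_eq dB (madd (mscale (RC (En k)) (W i k)) (mmul dB (W i k) D))
            (madd (mscale (RC (En i)) (W i k)) (mmul dB D (W i k))).
Proof.
  intros Hi Hk.
  assert (Hconj : mat_eq dB
     (mmul dB (mmul dB (adj V) (madd (mscale (RC (En k)) (block i k)) (mmul dB (block i k) HB))) V)
     (mmul dB (mmul dB (adj V) (madd (mscale (RC (En i)) (block i k)) (mmul dB HB (block i k)))) V))
    by (rewrite (block_commutation i k Hi Hk); reflexivity).
  rewrite !mmul_maddr, !mmul_maddl, !mmul_mscaler, !mmul_mscalel in Hconj.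
  unfold W, eigen_block. rewrite <- eigenbasis_HB, !conj_unitary_mmul by exact HV1.
  exact Hconj.
Qed.

Lemma eigen_block_energy i k b c : (i < dS)%nat -> (k < dS)%nat -> (b < dB)%nat -> (c < dB)%nat ->
  En k + eps c <> En i + eps b -> W i k b c = C0.
Proof.
  intros Hi Hk Hb Hc Hne. pose proof (eigen_block_commutation i k Hi Hk b c Hb Hc) as H.
  unfold madd, mscale, D in H. rewrite mmul_diagr, mmul_diagl in H by auto.
  destruct (W i k b c) as [x y]. unfold Cadd, Cmul, RC, C0 in *; simpl in *.
  injection H as Hx Hy.
  assert (Ex : x * (En k + eps c - (En i + eps b)) = 0) by lra.
  assert (Ey : y * (En k + eps c - (En i + eps b)) = 0) by lra.
  apply Rmult_integral in Ex, Ey.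
  destruct Ex, Ey; try lra. subst. reflexivity.
Qed.

Lemma eigen_block_rows i b : (i < dS)%nat -> (b < dB)%nat ->
  csum dS (fun k => mmul dB (W i k) (adj (W i k)) b b) = C1.
Proof.
  intros Hi Hb.
  enough (E : mat_eq dB (msum dS (fun k => mmul dB (W i k) (adj (W i k)))) delta).
  { pose proof (E b b Hb Hb) as Ebb. unfold msum, delta in Ebb.
    rewrite Nat.eqb_refl in Ebb. exact Ebb. }
  rewrite (msum_ext dB dS _
    (fun k => mmul dB (mmul dB (adj V) (mmul dB (block i k) (adj (block i k)))) V)).
  2:{ intros k _. unfold W, eigen_block. rewrite !adj_mmul, adjK.
      rewrite !mmulA, <- (mmulA dB V (adj V)), HV1, mmul1l. reflexivity. }
  rewrite <- mmul_msumr, <- mmul_msuml.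
  assert (Hrows : mat_eq dB (msum dS (fun k => mmul dB (block i k) (adj (block i k)))) delta).
  { intros b1 b2 Hb1 Hb2. pose proof (HU i b1 i b2 Hi Hb1 Hi Hb2) as H.
    unfold mmul2, adj2 in H. unfold msum, mmul, block, adj. rewrite H.
    unfold delta2, delta at 1. rewrite Nat.eqb_refl. ring. }
  rewrite Hrows, mmul1r, HV2. reflexivity.
Qed.

Lemma eigen_block_row_norm i k b : (i < dS)%nat -> (k < dS)%nat -> (b < dB)%nat ->
  rsum dB (fun c => Cmod (W i k b c) ^ 2) <= 1.
Proof.
  intros Hi Hk Hb. pose proof (f_equal fst (eigen_block_rows i b Hi Hb)) as H.
  simpl in H. rewrite fst_csum in H.
  assert (Hnorm : forall l, fst (mmul dB (W i l) (adj (W i l)) b b)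
                            = rsum dB (fun c => Cmod (W i l b c) ^ 2)).
  { intros l. unfold mmul, adj. rewrite fst_csum.
    apply rsum_ext. intros. symmetry. apply Cmod_sqr. }
  rewrite (rsum_ext dS _ _ (fun l _ => Hnorm l)) in H. rewrite <- H.
  apply (rsum_term_le dS (fun l => rsum dB (fun c => Cmod (W i l b c) ^ 2))); auto.
  intros. apply rsum_ge0. intros. nra.
Qed.

Lemma ptraceB_entry rho i j :
  ptraceB dB (mmul2 dS dB (mmul2 dS dB U (tensor rho gam)) (adj2 U)) i j =
  csum dS (fun k => csum dS (fun l =>
    Cmul (rho k l) (trace dB (mmul dB (mmul dB (block i k) gam) (adj (block j l)))))).
Proof.
  set (f := fun b k l c2 c1 =>
    Cmul (Cmul (U i b k c1) (Cmul (rho k l) (gam c1 c2))) (Cconj (U j b l c2))).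
  transitivity (csum dB (fun b => csum dS (fun k => csum dS (fun l =>
                  csum dB (fun c2 => csum dB (fun c1 => f b k l c2 c1)))))).
  - unfold ptraceB, mmul2, tensor, adj2. apply csum_ext. intros b _.
    transitivity (csum dS (fun l => csum dS (fun k =>
                    csum dB (fun c2 => csum dB (fun c1 => f b k l c2 c1))))).
    + apply csum_ext. intros l _. rewrite csum_swap. apply csum_ext. intros c2 _.
      rewrite <- csum_mul_r. apply csum_ext. intros k _. rewrite <- csum_mul_r. reflexivity.
    + apply csum_swap.
  - rewrite csum_swap. apply csum_ext. intros k _. rewrite csum_swap. apply csum_ext. intros l _.
    unfold trace, mmul, adj. rewrite <- csum_mul_l. apply csum_ext. intros b _.
    rewrite <- csum_mul_l. apply csum_ext. intros c2 _.
    rewrite <- csum_mul_r, <- csum_mul_l. apply csum_ext. intros c1 _. unfold f, block. ring.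
Qed.

Lemma trace_block_eigen i j k l :
  trace dB (mmul dB (mmul dB (block i k) gam) (adj (block j l))) =
  trace dB (mmul dB (mmul dB (W i k) G) (adj (W j l))).
Proof.
  unfold W, eigen_block. rewrite !adj_mmul, adjK, Hgam, !mmulA.
  rewrite (trace_mmulC dB (adj V)), !mmulA, HV1, mmul1r. reflexivity.
Qed.

Lemma thermal_entry rho i j :
  ptraceB dB (mmul2 dS dB (mmul2 dS dB U (tensor rho gam)) (adj2 U)) i j =
  csum dS (fun k => csum dS (fun l =>
    Cmul (rho k l) (trace dB (mmul dB (mmul dB (W i k) G) (adj (W j l)))))).
Proof.
  rewrite ptraceB_entry. apply csum_ext. intros k _. apply csum_ext. intros l _.
  rewrite trace_block_eigen. reflexivity.
Qed.

Lemma trace_eigen_blocks i j k l :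
  trace dB (mmul dB (mmul dB (W i k) G) (adj (W j l))) =
  csum dB (fun b => csum dB (fun c =>
    Cmul (Cmul (W i k b c) (RC (gibbs_weight dB beta eps c))) (Cconj (W j l b c)))).
Proof.
  unfold trace. apply csum_ext. intros b _. unfold mmul at 1. apply csum_ext. intros c Hc.
  unfold G. rewrite mmul_diagr by auto. reflexivity.
Qed.

Lemma trace_eigen_blocks_eq0 i j k l :
  (i < dS)%nat -> (j < dS)%nat -> (k < dS)%nat -> (l < dS)%nat ->
  En l - En k <> En j - En i ->
  trace dB (mmul dB (mmul dB (W i k) G) (adj (W j l))) = C0.
Proof.
  intros Hi Hj Hk Hl Hne. rewrite trace_eigen_blocks.
  apply csum_eq0. intros b Hb. apply csum_eq0. intros c Hc.
  destruct (Req_dec (En k + eps c) (En i + eps b)).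
  - rewrite (eigen_block_energy j l b c) by (auto; lra).
    rewrite Cconj_C0. ring.
  - rewrite (eigen_block_energy i k b c) by auto. ring.
Qed.

Lemma trace_eigen_blocks_bound i j k l :
  (0 < dB)%nat -> (i < dS)%nat -> (j < dS)%nat -> (k < dS)%nat -> (l < dS)%nat ->
  Cmod (trace dB (mmul dB (mmul dB (W i k) G) (adj (W j l)))) <= exp (- beta * (En i - En k)).
Proof.
  intros HdB Hi Hj Hk Hl. rewrite trace_eigen_blocks.
  pose proof (exp_pos (- beta * (En i - En k))) as He. set (e := exp (- beta * (En i - En k))) in *.
  set (g := gibbs_weight dB beta eps).
  assert (Hg : forall c, 0 <= g c) by (intros; apply gibbs_weight_ge0; auto).
  eapply Rle_trans; [apply Cmod_csum|].
  apply Rle_trans with (rsum dB (fun b => e * g b)).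
  2:{ rewrite rsum_scal. unfold g. rewrite gibbs_weight_sum by auto. lra. }
  apply rsum_le. intros b Hb.
  eapply Rle_trans; [apply Cmod_csum|].
  pose proof (Hg b). assert (0 <= e * g b) by nra.
  apply Rle_trans with
    (rsum dB (fun c => (e * g b / 2) * (Cmod (W i k b c) ^ 2 + Cmod (W j l b c) ^ 2))).
  - apply rsum_le. intros c Hc.
    rewrite !Cmod_mul, Cmod_conj, Cmod_RC by auto.
    destruct (Req_dec (En k + eps c) (En i + eps b)) as [E|E].
    + (* on the support of W_ik the Gibbs weights are in ratio e, and 2xy <= x^2 + y^2 *)
      unfold g. rewrite (gibbs_weight_shift dB beta eps HdB b c (En i - En k)) by lra.
      fold g e. set (x := Cmod (W i k b c)). set (y := Cmod (W j l b c)).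
      assert (0 <= e * g b * (x - y) ^ 2) by (apply Rmult_le_pos; [auto | apply pow2_ge_0]).
      nra.
    + rewrite (eigen_block_energy i k b c), Cmod_C0 by auto.
      pose proof (pow2_ge_0 (Cmod (W j l b c))). nra.
  - rewrite rsum_scal, rsum_add.
    pose proof (eigen_block_row_norm i k b Hi Hk Hb).
    pose proof (eigen_block_row_norm j l b Hj Hl Hb). nra.
Qed.

End ThermalBlocks.

Theorem mainTheorem17 :
  forall (beta E0 E1 E2 DE : R) (T : Mat -> Mat) (rho : Mat),
    0 < beta ->
    0 < DE ->
    E2 - E1 = DE ->
    E1 - E0 = DE ->
    density 3 rho ->
    rho 1%nat 2%nat = C0 ->
    thermal_operation 3 beta (H3 E0 E1 E2) T ->
    Cmod (T rho 1%nat 2%nat) <= exp (- beta * DE) * Cmod (rho 0%nat 1%nat).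
Proof.
  intros beta E0 E1 E2 DE T rho _ HDE H21 H10 _ Hrho12 HT.
  destruct HT as (dB & HB & gam & U & HdB & _ & (V & eps & [HV1 HV2] & HHB & Hgam)
                  & [HU _] & Hcomm & HT).
  set (En := fun i : nat => match i with 0%nat => E0 | 1%nat => E1 | _ => E2 end).
  change (H3 E0 E1 E2) with (diag (fun i => RC (En i))) in Hcomm.
  set (t := fun k l => trace dB (mmul dB (mmul dB (eigen_block dB V U 1 k)
              (diag (fun c => RC (gibbs_weight dB beta eps c)))) (adj (eigen_block dB V U 2 l)))).
  assert (Hentry : T rho 1%nat 2%nat = Cmul (rho 0%nat 1%nat) (t 0%nat 1%nat)).
  { rewrite HT, (thermal_entry 3 dB beta eps V gam U HV1 Hgam) by lia. cbn [csum].
    pose proof (trace_eigen_blocks_eq0 3 dB beta En eps V HB U HV1 HV2 HHB Hcomm) as Hzero.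
    rewrite (Hzero 1 2 0 0)%nat, (Hzero 1 2 0 2)%nat, (Hzero 1 2 1 0)%nat, (Hzero 1 2 1 1)%nat,
      (Hzero 1 2 2 0)%nat, (Hzero 1 2 2 1)%nat, (Hzero 1 2 2 2)%nat by (try lia; simpl; lra).
    rewrite Hrho12. unfold t. ring. }
  rewrite Hentry, Cmod_mul, (Rmult_comm (exp _)).
  apply Rmult_le_compat_l; [apply Cmod_ge_0|].
  replace DE with (En 1%nat - En 0%nat) by (simpl; lra).
  apply (trace_eigen_blocks_bound 3 dB beta En eps V HB U HV1 HV2 HHB HU Hcomm); lia.
Qed.
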